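(* Let $q$ be an odd prime with $q \neq 5$, and let $k$ be an integer with $2 \leq k \leq 31$ such that $p = kq+1$ is prime and $z(p) \mid \pi(q)$. Then $k = 2$; that is, $p = 2q+1$ and $q$ is a Sophie Germain prime.
   Context: $F_n$ denotes the $n$-th Fibonacci number ($F_0 = 0$, $F_1 = 1$). For a prime $p$, $z(p)$ (rank of apparition) is the least positive integer $k$ with $p \mid F_k$. $\pi(n)$ is the Pisano period, the least period of $(F_m \bmod n)_{m\ge0}$. A Sophie Germain prime is a prime $q$ with $2q+1$ prime. *)

From mathcomp Require Import all_boot.
Set Implicit Arguments. Unset Strict Implicit. Unset Printing Implicit Defensive.

Fixpoint fibp (n : nat) : nat * nat :=
  match n with
  | 0 => (0, 1)
  | n'.+1 => let (a, b) := fibp n' in (b, a + b)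
  end.
Definition fib (n : nat) : nat := (fibp n).1.

Definition is_rank_app (p k : nat) : Prop :=
  0 < k /\ p %| fib k /\ (forall j, 0 < j -> p %| fib j -> k <= j).

Definition is_period (n m : nat) : Prop :=
  forall i, fib (i + m) %% n = fib i %% n.
Definition is_pisano (n m : nat) : Prop :=
  0 < m /\ is_period n m /\ (forall m', 0 < m' -> is_period n m' -> m <= m').

From Stdlib Require Import NArith.
From mathcomp Require Import all_boot all_algebra.
From mathcomp Require Import ring zify.
Set Implicit Arguments. Unset Strict Implicit. Unset Printing Implicit Defensive.
Import GRing.Theory.

(* Over F_r, for an odd prime r other than 5, twice the Fibonacci matrix Q is
   1 + S with S^2 = 5. Frobenius gives 2^r Q^r = 1 + 5^((r-1)/2) S, and Euler's
   criterion 5^((r-1)/2) = +-1 pins down Q^r: r divides F_(r-1) or F_(r+1).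
   Hence z(p) divides p - 1 = kq or p + 1 = kq + 2, while pi(q) divides q - 1 or
   2(q + 1) and is thus prime to q. As z(p) | pi(q), z(p) divides k, k + 2 or
   2(k - 2), so p = kq + 1 divides F_k, F_(k+2) or F_(2k-4). Since p is odd, k is
   even, and for even k in [4, 30] the factorisations of these Fibonacci numbers
   contain no prime of the form kq + 1. *)

Lemma fibSS n : fib n.+2 = fib n.+1 + fib n.
Proof. by rewrite /fib /=; case: (fibp n) => a b /=; rewrite addnC. Qed.

Section FibonacciMatrix.
Variable R : comNzRingType.
Local Open Scope ring_scope.

Definition fibr n : R := (fib n)%:R.

Definition mx2 (a b c d : R) : 'M[R]_2 :=
  \matrix_(i, j) if (i : nat) == 0%N then (if (j : nat) == 0%N then a else b)
                 else (if (j : nat) == 0%N then c else d).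

Definition fibQ := mx2 1 1 1 0.

Lemma fibrSS n : fibr n.+2 = fibr n.+1 + fibr n.
Proof. by rewrite /fibr fibSS natrD. Qed.

Lemma fibrS n : (0 < n)%N -> fibr n.+1 = fibr n + fibr n.-1.
Proof. by case: n => // n _; rewrite fibrSS. Qed.

Lemma mx2M a b c d a' b' c' d' : mx2 a b c d * mx2 a' b' c' d' =
  mx2 (a * a' + b * c') (a * b' + b * d') (c * a' + d * c') (c * b' + d * d').
Proof.
apply/matrixP => i j; rewrite !mxE big_ord_recl big_ord1 !mxE /=.
by case: i => [[|[|//]] ?]; case: j => [[|[|//]] ?].
Qed.

Lemma mx2D a b c d a' b' c' d' :
  mx2 a b c d + mx2 a' b' c' d' = mx2 (a + a') (b + b') (c + c') (d + d').
Proof.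
apply/matrixP => i j; rewrite !mxE.
by case: i => [[|[|//]] ?]; case: j => [[|[|//]] ?].
Qed.

Lemma mx2_scalar c : c%:M = mx2 c 0 0 c.
Proof.
apply/matrixP => i j; rewrite !mxE.
by case: i => [[|[|//]] ?]; case: j => [[|[|//]] ?].
Qed.

Lemma mx2_inj a b c d a' b' c' d' : mx2 a b c d = mx2 a' b' c' d' ->
  [/\ a = a', b = b', c = c' & d = d'].
Proof.
move/matrixP => eq_mx; split.
- by move: (eq_mx ord0 ord0); rewrite !mxE.
- by move: (eq_mx ord0 ord_max); rewrite !mxE.
- by move: (eq_mx ord_max ord0); rewrite !mxE.
- by move: (eq_mx ord_max ord_max); rewrite !mxE.
Qed.

Lemma fibQ_expS n : fibQ ^+ n.+1 = mx2 (fibr n.+2) (fibr n.+1) (fibr n.+1) (fibr n).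
Proof.
elim: n => [|n IHn]; first by rewrite expr1 /fibr /fib /=.
by rewrite exprS IHn /fibQ mx2M !fibrSS; congr mx2; ring.
Qed.

Lemma fibQ_exp n : (0 < n)%N -> fibQ ^+ n = mx2 (fibr n.+1) (fibr n) (fibr n) (fibr n.-1).
Proof. by case: n => // n _; rewrite fibQ_expS. Qed.

Lemma fibr_consecutive n : fibr n.+1 = 0 -> fibr n != 0.
Proof.
elim: n => [|n IHn]; first by rewrite /fibr /fib /= => /eqP; rewrite oner_eq0.
rewrite fibrSS => Fn2; apply/eqP => Fn1.
by move: Fn2 (IHn Fn1); rewrite Fn1 add0r => ->; rewrite eqxx.
Qed.

End FibonacciMatrix.

Section FibonacciModPrime.
Variable r : nat.
Hypothesis r_prime : prime r.
Local Notation F := 'F_r.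
Local Open Scope ring_scope.

Lemma natr_Fp_eq m n : ((m%:R : F) == n%:R) = (m == n %[mod r])%N.
Proof. by rewrite -val_eqE /= !val_Fp_nat. Qed.

Lemma Fp_fermat n : (n%:R : F) ^+ r = n%:R.
Proof. by rewrite -natrX; apply/eqP; rewrite natr_Fp_eq; apply/eqP/fermat_little. Qed.

Lemma Fp_natr_neq0 n : prime n -> n != r -> (n%:R : F) != 0.
Proof.
by move=> n_prime; rewrite -(dvdn_pcharf (pchar_Fp r_prime)) dvdn_prime2 // eq_sym.
Qed.

Lemma fibQ_exp_prime : odd r -> r != 5%N -> exists2 e : F, e ^+ 2 = 1 &
  fibQ F ^+ r * 2%:R%:M = 1 + e%:M * mx2 1 2%:R 2%:R (-1).
Proof.
move=> r_odd r_neq5; pose S := mx2 (1 : F) 2%:R 2%:R (-1).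
have [h def_r] : exists h, r = h.*2.+1.
  by exists r./2; rewrite -{1}(odd_double_half r) r_odd.
exists ((5%:R : F) ^+ h).
  have five_neq0 : (5%:R : F) != 0 by apply: Fp_natr_neq0; rewrite // eq_sym.
  rewrite -exprM muln2; apply: (mulIf five_neq0).
  by rewrite -exprSr -def_r Fp_fermat mul1r.
have twiceQ : fibQ F * 2%:R%:M = 1 + S.
  by rewrite -idmxE !mx2_scalar mx2M mx2D; congr mx2; ring.
have S_sq : S ^+ 2 = 5%:R%:M by rewrite expr2 mx2M mx2_scalar; congr mx2; ring.
have frobenius : (1 + S) ^+ r = 1 + S ^+ r.
  have pchar_mx : r \in [pchar 'M[F]_2] by rewrite pchar_lalg pchar_Fp.
  have := pFrobenius_autD_comm pchar_mx (commr_sym (commr1 S)).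
  by rewrite !pFrobenius_autE expr1n.
have -> : fibQ F ^+ r * 2%:R%:M = (fibQ F * 2%:R%:M) ^+ r.
  rewrite exprMn_comm; last exact: esym (comm_scalar_mx _ _).
  by rewrite -rmorphXn Fp_fermat.
have -> : (5%:R ^+ h)%:M = S ^+ h.*2 by rewrite -mul2n exprM S_sq; exact: rmorphXn.
by rewrite twiceQ frobenius -exprSr -def_r.
Qed.

Lemma fibr_prime_cases : odd r -> r != 5%N ->
  (fibr F r.-1 = 0 /\ fibr F r = 1) \/ (fibr F r.+1 = 0 /\ fibr F r = -1).
Proof.
move=> r_odd r_neq5; have [e e_sq] := fibQ_exp_prime r_odd r_neq5.
rewrite fibQ_exp ?prime_gt0 // -idmxE !mx2_scalar !mx2M mx2D.
move=> /mx2_inj [Fr1 Fr _ Frm1].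
have two_neq0 : (2%:R : F) != 0.
  by apply: Fp_natr_neq0 => //; apply: contraTneq r_odd => <-.
have : (e == 1) || (e == -1) by rewrite -sqrf_eq1 e_sq.
case/orP => /eqP e_pm1; rewrite e_pm1 in Fr1 Fr Frm1; [left|right];
  rewrite !(mulr0, mul0r, mul1r, mulr1, add0r, addr0, mulN1r) in Fr1 Fr Frm1;
  split; apply: (mulIf two_neq0).
- by rewrite Frm1 subrr mul0r.
- by rewrite Fr mul1r.
- by rewrite Fr1 subrr mul0r.
- by rewrite Fr mulN1r.
Qed.
End FibonacciModPrime.

Section PisanoPeriod.
Variable q : nat.
Hypothesis q_prime : prime q.
Local Notation F := 'F_q.
Local Open Scope ring_scope.

Lemma is_period_fibQ m : (0 < m)%N -> is_period q m <-> fibQ F ^+ m = 1.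
Proof.
move=> m_gt0; split=> [per | Qm1 i].
- have fibr_per i : fibr F (i + m) = fibr F i.
    by apply/eqP; rewrite natr_Fp_eq //; apply/eqP/per.
  have F1 := fibr_per 1%N; have F0 := fibr_per 0%N.
  rewrite add1n in F1; rewrite add0n in F0.
  have Fm1 : fibr F m.-1 = 1 by move: F1; rewrite fibrS // F0 add0r.
  by rewrite fibQ_exp // -idmxE mx2_scalar F1 F0 Fm1.
- apply/eqP; rewrite -natr_Fp_eq //; apply/eqP.
  have : fibQ F ^+ (i + m).+1 = fibQ F ^+ i.+1 by rewrite -addSn exprD Qm1 mulr1.
  by rewrite !fibQ_expS => /mx2_inj [_ _ _].
Qed.

Lemma pisano_dvd pi n : is_pisano q pi -> (0 < n)%N -> fibQ F ^+ n = 1 -> (pi %| n)%N.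
Proof.
case=> pi_gt0 [per pi_min] n_gt0 Qn1; apply: contraT => pi_ndvd.
have Qmod1 : fibQ F ^+ (n %% pi) = 1.
  move: Qn1; rewrite {1}(divn_eq n pi) exprD mulnC exprM.
  by rewrite (is_period_fibQ pi_gt0).1 // expr1n mul1r.
have mod_gt0 : (0 < n %% pi)%N by rewrite lt0n.
have := pi_min _ mod_gt0 ((is_period_fibQ mod_gt0).2 Qmod1).
by rewrite leqNgt ltn_pmod.
Qed.

Lemma pisano_dvd_cases pi : odd q -> q != 5%N -> is_pisano q pi ->
  (pi %| q.-1)%N || (pi %| q.+1.*2)%N.
Proof.
move=> q_odd q_neq5 pisano.
have [[Fqm1 Fq] | [Fqp1 Fq]] := fibr_prime_cases q_prime q_odd q_neq5.
- have qm1_gt0 : (0 < q.-1)%N by rewrite -subn1 subn_gt0 prime_gt1.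
  apply/orP; left; apply: (pisano_dvd pisano) => //.
  have Fqm2 : fibr F q.-2 = 1.
    by move: (fibrS F qm1_gt0); rewrite prednK ?prime_gt0 // Fq Fqm1 add0r.
  by rewrite fibQ_exp // prednK ?prime_gt0 // -idmxE mx2_scalar Fq Fqm1 Fqm2.
- apply/orP; right; apply: (pisano_dvd pisano) => //.
  have Qqp1 : fibQ F ^+ q.+1 = (-1)%:M.
    by rewrite fibQ_expS fibrSS Fqp1 Fq add0r mx2_scalar.
  by rewrite -muln2 exprM Qqp1 -rmorphXn sqrrN expr1n.
Qed.

End PisanoPeriod.

Section RankOfApparition.
Variable p : nat.
Hypothesis p_prime : prime p.
Local Notation F := 'F_p.
Local Open Scope ring_scope.

Lemma fibr_Fp_eq0 n : (fibr F n == 0) = (p %| fib n)%N.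
Proof. by rewrite (dvdn_pcharf (pchar_Fp p_prime)). Qed.

Lemma rank_app_fibQ z : is_rank_app p z -> exists2 c : F, c != 0 & fibQ F ^+ z = c%:M.
Proof.
case=> z_gt0 [p_dvd_Fz _]; have Fz : fibr F z = 0 by apply/eqP; rewrite fibr_Fp_eq0.
exists (fibr F z.-1); first by apply: fibr_consecutive; rewrite prednK.
by rewrite fibQ_exp // fibrS // Fz add0r mx2_scalar.
Qed.

Lemma rank_app_dvd z n : is_rank_app p z -> (p %| fib n)%N = (z %| n)%N.
Proof.
move=> rank; have [c c_neq0 Qz] := rank_app_fibQ rank.
case: rank => z_gt0 [_ z_min].
have Qmul m : fibQ F ^+ (m * z) = (c ^+ m)%:M by rewrite mulnC exprM Qz rmorphXn.
case: n => [|n]; first by rewrite !dvdn0.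
apply/idP/idP => [p_dvd | /dvdnP [m def_n]].
- apply: contraT => z_ndvd; have mod_gt0 : (0 < n.+1 %% z)%N by rewrite lt0n.
  have : fibQ F ^+ n.+1 = (c ^+ (n.+1 %/ z))%:M * fibQ F ^+ (n.+1 %% z).
    by rewrite {1}(divn_eq n.+1 z) exprD Qmul.
  rewrite fibQ_exp // fibQ_exp // mx2_scalar mx2M => /mx2_inj [_ Fn _ _].
  move: Fn; rewrite mul0r addr0 (eqP _ : fibr F n.+1 = 0) ?fibr_Fp_eq0 //.
  move/esym/eqP; rewrite mulf_eq0 expf_eq0 (negbTE c_neq0) andbF fibr_Fp_eq0 /=.
  by move=> /(z_min _ mod_gt0); rewrite leqNgt ltn_pmod.
- have m_gt0 : (0 < m)%N by case: m def_n.
  have := Qmul m; rewrite -def_n fibQ_exp // mx2_scalar => /mx2_inj [_ Fn _ _].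
  by rewrite -fibr_Fp_eq0 Fn.
Qed.

Lemma rank_app_dvd_cases z : odd p -> p != 5%N -> is_rank_app p z ->
  (z %| p.-1)%N || (z %| p.+1)%N.
Proof.
move=> p_odd p_neq5 rank; rewrite -!(rank_app_dvd _ rank) -!fibr_Fp_eq0.
by have [[-> _] | [-> _]] := fibr_prime_cases p_prime p_odd p_neq5; rewrite eqxx ?orbT.
Qed.

End RankOfApparition.

(* Binary copy of [fib]: the unary values of [fib D] for D up to 56 cannot be computed. *)
Fixpoint fibN_pair (n : nat) : N * N :=
  match n with
  | 0 => (N0, Npos xH)
  | n'.+1 => let (a, b) := fibN_pair n' in (b, N.add a b)
  end.

Definition fibN n := (fibN_pair n).1.

Lemma fibNE n : fibN n = N.of_nat (fib n).
Proof.
rewrite /fibN; suff -> : fibN_pair n = (N.of_nat (fibp n).1, N.of_nat (fibp n).2) by [].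
elim: n => [//|n /=]; case: (fibp n) => a b /=; case: (fibN_pair n) => c d [-> ->].
by rewrite Nat2N.inj_add.
Qed.

Definition prodN (s : seq nat) : N := foldr (fun f acc => N.mul (N.of_nat f) acc) N.one s.

Lemma prodNE s : prodN s = N.of_nat (\prod_(f <- s) f).
Proof. by elim: s => [|f s IHs]; rewrite ?big_nil ?big_cons //= IHs Nat2N.inj_mul. Qed.

Definition fib_candidates k := [:: k; k.+2; (k - 2).*2].

Definition fib_factors (D : nat) : seq nat :=
  match D with
  | 4 => [:: 3] | 6 => [:: 2; 2; 2] | 8 => [:: 3; 7] | 10 => [:: 5; 11]
  | 12 => [:: 2; 2; 2; 2; 3; 3] | 14 => [:: 13; 29] | 16 => [:: 3; 7; 47]
  | 18 => [:: 2; 2; 2; 17; 19] | 20 => [:: 3; 5; 11; 41] | 22 => [:: 89; 199]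
  | 24 => [:: 2; 2; 2; 2; 2; 3; 3; 7; 23] | 26 => [:: 233; 521]
  | 28 => [:: 3; 13; 29; 281] | 30 => [:: 2; 2; 2; 5; 11; 31; 61]
  | 32 => [:: 3; 7; 47; 2207] | 36 => [:: 2; 2; 2; 2; 3; 3; 3; 17; 19; 107]
  | 40 => [:: 3; 5; 7; 11; 41; 2161] | 44 => [:: 3; 43; 89; 199; 307]
  | 48 => [:: 2; 2; 2; 2; 2; 2; 3; 3; 7; 23; 47; 1103]
  | 52 => [:: 3; 233; 521; 90481] | 56 => [:: 3; 7; 7; 13; 29; 281; 14503]
  | _ => [::]
  end.

Definition is_kq_succ k f := [&& k %| f.-1, prime (f.-1 %/ k) & odd (f.-1 %/ k)].

Definition fib_factor_table_ok :=
  all (fun k => ~~ odd k ==> all (fun D =>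
         [&& fibN D == prodN (fib_factors D), all prime (fib_factors D)
           & ~~ has (is_kq_succ k) (fib_factors D)])
       (fib_candidates k))
    (iota 4 27).

Lemma fib_factor_tableP : fib_factor_table_ok.
Proof. by vm_compute. Qed.

Lemma fib_candidate_ndvd k D q : 4 <= k <= 30 -> ~~ odd k -> D \in fib_candidates k ->
  prime q -> odd q -> prime (k * q + 1) -> ~~ (k * q + 1 %| fib D).
Proof.
move=> /andP [k_ge4 k_le30] k_even D_cand q_prime q_odd p_prime.
have k_iota : k \in iota 4 27 by rewrite mem_iota; apply/andP; split; lia.
have /and3P [/eqP fibD factors_prime no_kq_succ] :=
  allP (implyP (allP fib_factor_tableP k k_iota) k_even) D D_cand.
have -> : fib D = \prod_(f <- fib_factors D) f.
  by apply: Nat2N.inj; rewrite -fibNE -prodNE.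
rewrite Euclid_dvd_prod // big_has; apply: contra no_kq_succ => /hasP [f f_factor].
rewrite (dvdn_prime2 p_prime (allP factors_prime f f_factor)) => /eqP def_f.
apply/hasP; exists f => //.
rewrite -def_f /is_kq_succ addn1 /= dvdn_mulr // mulKn ?q_prime ?q_odd //; lia.
Qed.

Lemma rank_dvd_fib_candidate q k z pi : prime q -> odd q -> 2 <= k -> z %| pi ->
  (pi %| q.-1) || (pi %| q.+1.*2) -> (z %| k * q) || (z %| (k * q).+2) ->
  exists2 D, D \in fib_candidates k & z %| D.
Proof.
move=> q_prime q_odd k_ge2 z_pi pi_cases z_cases; have q_gt0 := prime_gt0 q_prime.
have coprime_z_q : coprime z q.
  rewrite coprime_sym; apply: (coprime_dvdr z_pi).
  case/orP: pi_cases => /coprime_dvdr; apply; first exact: coprimenP.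
  by rewrite -muln2 coprimeMr coprimenS coprimen2.
case/orP: z_cases => [z_kq | z_kq2].
  by exists k; rewrite ?mem_head // -(Gauss_dvdl k coprime_z_q).
case/orP: pi_cases => [pi_qm1 | pi_qp1].
- exists k.+2; first by rewrite !inE eqxx orbT.
  have z_kqm1 : z %| k * q.-1 by rewrite dvdn_mull // (dvdn_trans z_pi).
  rewrite -(dvdn_addr _ z_kqm1); congr (_ %| _): z_kq2.
  by rewrite -{1}(prednK q_gt0) mulnS; lia.
- exists (k - 2).*2; first by rewrite !inE eqxx !orbT.
  have z_kqp1 : z %| k * q.+1.*2 by rewrite dvdn_mull // (dvdn_trans z_pi).
  rewrite -(dvdn_addl _ (dvdn_mull 2 z_kq2)); congr (_ %| _): z_kqp1.
  rewrite -!muln2; nia.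
Qed.

Theorem theorem4p2 (q k : nat) :
  prime q -> odd q -> q != 5 ->
  2 <= k <= 31 ->
  prime (k * q + 1) ->
  (exists z pi, is_rank_app (k * q + 1) z /\ is_pisano q pi /\ z %| pi) ->
  k = 2 /\ k * q + 1 = 2 * q + 1 /\ prime q /\ prime (2 * q + 1).
Proof.
move=> q_prime q_odd q_neq5 /andP [k_ge2 k_le31] p_prime [z [pi [rank [pisano z_pi]]]].
suff k2 : k = 2 by subst k.
have q_gt2 := odd_prime_gt2 q_odd q_prime.
have p_odd : odd (k * q + 1).
  by have [p2 | //] := even_prime p_prime; nia.
have k_even : ~~ odd k by move: p_odd; rewrite addn1 /= oddM q_odd andbT.
apply/eqP; apply: contraT => k_neq2.
have k_range : 4 <= k <= 30.
  by move/eqP: k_neq2; have := odd_double_half k; rewrite (negbTE k_even); lia.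
have p_neq5 : k * q + 1 != 5 by nia.
have z_cases : (z %| k * q) || (z %| (k * q).+2).
  by have := rank_app_dvd_cases p_prime p_odd p_neq5 rank; rewrite addn1.
have [D D_cand z_D] := rank_dvd_fib_candidate q_prime q_odd k_ge2 z_pi
  (pisano_dvd_cases q_prime q_odd q_neq5 pisano) z_cases.
have := fib_candidate_ndvd k_range k_even D_cand q_prime q_odd p_prime.
by rewrite (rank_app_dvd p_prime _ rank) z_D.
Qed.
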